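(* Let $q$ be a prime power, $\ell\ge1$, and let $\mathcal{A}$ be a central hyperplane arrangement in $\mathbb{F}_q^\ell$. If $\chi(\mathcal{A}, q^k)=0$ for some integer $k\geq 0$, then $\chi(\mathcal{A}, q^j)=0$ for all integers $j$ with $0\leq j\leq k$.
   Context: A (central) hyperplane arrangement $\mathcal{A}$ in a vector space $V$ over a field $\mathbb{K}$ is a finite set of linear subspaces of codimension one. $L(\mathcal{A})$ denotes the set of all intersections of subsets of $\mathcal{A}$ (including $V$ itself as the empty intersection), ordered by reverse inclusion, with minimal element $\hat 0=V$. The Möbius function $\mu:L(\mathcal{A})\to\mathbb{Z}$ is defined by $\mu(\hat0)=1$ and $\mu(X)=-\sum_{Y<X}\mu(Y)$ for $X>\hat 0$. The characteristic polynomial is $\chi(\mathcal{A},t)=\sum_{X\in L(\mathcal{A})}\mu(X)t^{\dim X}$. *)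

From mathcomp Require Import all_boot all_algebra all_field.
Set Implicit Arguments. Unset Strict Implicit. Unset Printing Implicit Defensive.
Import GRing.Theory.
Local Open Scope ring_scope.

(* Ambient space: 'rV[F]_l, i.e. F^l, for a finite field F (so q = #|F|). *)

Definition is_hyperplane (F : fieldType) (l : nat) (H : {vspace 'rV[F]_l}) : bool :=
  ((\dim H).+1 == \dim (fullv : {vspace 'rV[F]_l}))%N.

Definition is_arrangement (F : fieldType) (l : nat) (A : seq {vspace 'rV[F]_l}) : bool :=
  uniq A && all (@is_hyperplane F l) A.

Definition intersection_lattice (F : fieldType) (l : nat) (A : seq {vspace 'rV[F]_l})
  : seq {vspace 'rV[F]_l} :=
  undup (map (fun B : {set 'I_(size A)} =>
                (\bigcap_(i in B) (tnth (in_tuple A) i))%VS)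
             (enum [set: {set 'I_(size A)}])).

(* Möbius function on L(A), ordered by reverse inclusion:
   mu(V) = 1,  mu(X) = - sum_{Y in L, Y < X} mu(Y), where Y < X means Y strictly
   contains X.  Defined by recursion with fuel; any fuel >= dim V - dim X gives
   the correct value (a strict chain above X has length <= dim V - dim X). *)
Fixpoint mobius_fuel (F : fieldType) (l : nat) (A : seq {vspace 'rV[F]_l})
  (n : nat) (X : {vspace 'rV[F]_l}) : int :=
  if X == fullv then 1 else
  match n with
  | 0 => 0
  | n'.+1 => - \sum_(Y <- intersection_lattice A | (X <= Y)%VS && (X != Y)) mobius_fuel A n' Y
  end.

Definition mobius (F : fieldType) (l : nat) (A : seq {vspace 'rV[F]_l})
  (X : {vspace 'rV[F]_l}) : int :=
  mobius_fuel A (\dim (fullv : {vspace 'rV[F]_l})) X.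

Definition char_poly_arr (F : fieldType) (l : nat) (A : seq {vspace 'rV[F]_l})
  : {poly int} :=
  \sum_(X <- intersection_lattice A) (mobius A X)%:P * 'X^(\dim X).

From mathcomp Require Import all_boot all_algebra all_field.
From mathcomp Require Import zify.
Import GRing.Theory Num.Theory.
Local Open Scope ring_scope.

(* Write q = #|F|. For a k-tuple x of vectors, let cl x be the smallest flat of
   L(A) containing all of its entries. Möbius inversion over L(A) gives
   chi(A, q^k) = #{x | cl x = V}: indeed q^(k dim X) counts the tuples with
   cl x <= X, and the Möbius sums over the flats above cl x vanish unless
   cl x = V. Padding a j-tuple with zero vectors to a k-tuple, j <= k, can only
   enlarge cl x, so if no k-tuple has cl x = V then no j-tuple does either. *)

Section CharPolyCount.
Variables (F : finFieldType) (l : nat) (A : seq {vspace 'rV[F]_l}).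

Local Notation vT := 'rV[F]_l.
Local Notation L := (intersection_lattice A).
Local Notation dimV := (\dim (fullv : {vspace vT})).
Local Notation H i := (tnth (in_tuple A) i).

Lemma intersection_latticeP (X : {vspace vT}) :
  reflect (exists B : {set 'I_(size A)}, X = (\bigcap_(i in B) H i)%VS) (X \in L).
Proof.
rewrite /intersection_lattice mem_undup; apply: (iffP mapP).
  by case=> B _ ->; exists B.
by case=> B ->; exists B; rewrite ?mem_enum ?in_setT.
Qed.

Lemma fullv_in_lattice : (fullv : {vspace vT}) \in L.
Proof. by apply/intersection_latticeP; exists set0; rewrite big_pred0 // => i; rewrite inE. Qed.

Lemma dimv_ltn {X Y : {vspace vT}} : (X <= Y)%VS -> X != Y -> (\dim X < \dim Y)%N.
Proof. by move=> sXY; rewrite (ltn_leqif (dimv_leqif_eq sXY)). Qed.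

Lemma mobius_fuel_stable n m (X : {vspace vT}) :
  (dimV - \dim X <= n)%N -> (dimV - \dim X <= m)%N ->
  mobius_fuel A n X = mobius_fuel A m X.
Proof.
elim: n m X => [|n IHn] [|m] X /=; case: eqP => // /eqP XnV hn hm;
  have := dimv_ltn (subvf X) XnV; rewrite -subn_gt0 => d;
  try by move: hn hm; rewrite leqn0 (gtn_eqF d).
congr (- _); apply: eq_bigr => Y /andP[sXY XnY]; apply: IHn;
  have := dimv_ltn sXY XnY; lia.
Qed.

Lemma mobius_fullv : mobius A fullv = 1.
Proof. by rewrite /mobius; case: dimV => [|n] /=; rewrite eqxx. Qed.

Lemma mobiusE (X : {vspace vT}) : X != fullv ->
  mobius A X = - \sum_(Y <- L | (X <= Y)%VS && (X != Y)) mobius A Y.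
Proof.
move=> XnV; have := dimv_ltn (subvf X) XnV.
rewrite /mobius; case dV: dimV => [|d] // _.
rewrite [LHS]/= (negbTE XnV); congr (- _).
apply: eq_bigr => Y /andP[sXY XnY]; apply: mobius_fuel_stable;
  have := dimv_ltn sXY XnY; lia.
Qed.

Lemma sum_mobius_above (Y : {vspace vT}) : Y \in L ->
  \sum_(X <- L | (Y <= X)%VS) mobius A X = (Y == fullv)%:R.
Proof.
move=> YL; have uL : uniq L by rewrite undup_uniq.
rewrite big_mkcond; have [-> | YnV] := eqVneq Y fullv.
  rewrite (bigD1_seq _ fullv_in_lattice uL) /= subvv mobius_fullv big1 ?addr0 //.
  move=> X XnV; case: ifP => // sVX; move: XnV.
  by rewrite eqEdim subvf (dimvS sVX).
rewrite (bigD1_seq _ YL uL) /= subvv (mobiusE _ YnV) -big_mkcondr.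
rewrite [X in _ + X](eq_bigl (fun X => (Y <= X)%VS && (Y != X))) ?addNr //.
by move=> X; rewrite eq_sym andbC.
Qed.

Definition flat_hull {k} (x : {ffun 'I_k -> vT}) : {vspace vT} :=
  (\bigcap_(i in [set i : 'I_(size A) | [forall t, x t \in H i]]) H i)%VS.

Lemma flat_hull_in_lattice k (x : {ffun 'I_k -> vT}) : flat_hull x \in L.
Proof. by apply/intersection_latticeP; eexists. Qed.

Lemma flat_hull_subE k (x : {ffun 'I_k -> vT}) X : X \in L ->
  (flat_hull x <= X)%VS = [forall t, x t \in X].
Proof.
case/intersection_latticeP=> B ->; apply/idP/forallP.
  move=> sxB t; rewrite memvE; apply: subv_trans sxB.
  by apply/subv_bigcapP => i; rewrite inE => /forallP /(_ t); rewrite memvE.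
move=> xB; apply/subv_bigcapP => i iB; apply: (bigcapv_inf i) (subvv _).
rewrite inE; apply/forallP => t; have := xB t; rewrite !memvE => /subv_trans; apply.
exact: (bigcapv_inf i) iB (subvv _).
Qed.

Lemma flat_hullS j k (x : {ffun 'I_j -> vT}) (y : {ffun 'I_k -> vT}) :
  (forall s, exists t, x s = y t) -> (flat_hull x <= flat_hull y)%VS.
Proof.
move=> xy; rewrite flat_hull_subE ?flat_hull_in_lattice //; apply/forallP => s.
have [t ->] := xy s; rewrite memvE; apply/subv_bigcapP => i.
by rewrite inE => /forallP /(_ t); rewrite memvE.
Qed.

Lemma card_tuples_in k (X : {vspace vT}) :
  #|[set x : {ffun 'I_k -> vT} | [forall t, x t \in X]]| = ((#|F| ^ k) ^ \dim X)%N.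
Proof.
rewrite -expnM mulnC expnM -card_vspace -[k in (_ ^ k)%N]card_ord -card_ffun_on.
by apply: eq_card => x; rewrite inE; apply/forallP/familyP.
Qed.

Lemma char_poly_arr_count k : (char_poly_arr A).[(#|F| ^ k)%N%:R] =
  #|[set x : {ffun 'I_k -> vT} | flat_hull x == fullv]|%:R.
Proof.
rewrite /char_poly_arr horner_sum.
under eq_bigr => X _ do rewrite hornerCM hornerXn -natrX.
transitivity (\sum_(X <- L) \sum_(x : {ffun 'I_k -> vT})
                 (mobius A X * ((flat_hull x <= X)%VS)%:R)).
  apply: eq_big_seq => X XL; rewrite -mulr_sumr; congr (_ * _).
  rewrite -card_tuples_in -sum1_card natr_sum big_mkcond; apply: eq_bigr => x _.
  by rewrite inE flat_hull_subE //; case: ifP.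
rewrite exchange_big /= -sum1_card natr_sum [RHS]big_mkcond; apply: eq_bigr => x _.
rewrite (eq_bigr (fun X => if (flat_hull x <= X)%VS then mobius A X else 0)).
  by rewrite -big_mkcond sum_mobius_above ?flat_hull_in_lattice // inE; case: eqP.
by move=> X _; case: ifP; rewrite ?mulr1 ?mulr0.
Qed.

Lemma flat_hull_pad j k (x : {ffun 'I_j -> vT}) : (j <= k)%N ->
  exists y : {ffun 'I_k -> vT}, (flat_hull x <= flat_hull y)%VS.
Proof.
move=> jk; exists [ffun t : 'I_k => (if insub (val t) is Some s then x s else 0) : vT].
apply: flat_hullS => s; exists (widen_ord jk s); rewrite ffunE.
by case: insubP => [s' _ /val_inj -> | ] //=; rewrite ltn_ord.
Qed.

End CharPolyCount.
Arguments flat_hull {F l} A {k} x.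
Arguments flat_hull_pad {F l} A {j k} x.

(* The counting formula holds for any finite family of subspaces. *)
Theorem mainTheorem2 (F : finFieldType) (l : nat) (A : seq {vspace 'rV[F]_l}) :
  (1 <= l)%N ->
  is_arrangement A ->
  forall k : nat,
    (char_poly_arr A).[((#|F| ^ k)%N)%:R] = 0 ->
    forall j : nat, (j <= k)%N -> (char_poly_arr A).[((#|F| ^ j)%N)%:R] = 0.
Proof.
move=> _ _ k; rewrite char_poly_arr_count => /eqP; rewrite pnatr_eq0 cards_eq0.
move=> /eqP no_k_tuple j jk; apply/eqP; rewrite char_poly_arr_count pnatr_eq0 cards_eq0.
apply: contraT => /set0Pn [x]; rewrite inE => /eqP x_full.
have [y sxy] := flat_hull_pad A x jk.
have y_full : flat_hull A y == fullv by rewrite eqEsubv subvf -x_full.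
by move/setP/(_ y): no_k_tuple; rewrite !inE y_full.
Qed.
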